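(* Let $n\ge4$ and let $W_n$ be the wheel graph on $n$ vertices with oriented incidence matrix \[N=\left[\begin{array}{c|c} \mathbf{1}^T & \mathbf{0}^T \\ \hline -I_{n-1} & C \end{array}\right],\] where $C$ is the circulant matrix $\mathrm{circ}(1,0,\ldots,0,-1)$ of order $n-1$. Then $CC^T+I_{n-1}$ is invertible and the Moore–Penrose inverse of $N$ is \[N^+=\frac{1}{n} \left[\begin{array}{r|c} \mathbf{1} & X \\ \hline \mathbf{0} & Y \end{array}\right],\] where $X=(CC^T+I_{n-1})^{-1}(J_{n-1}-nI_{n-1})$ and $Y=-C^TX$.
   Context: The wheel graph $W_n$ ($n\ge4$) is a cycle on $n-1$ vertices together with a hub vertex adjacent to every cycle vertex. An oriented incidence matrix of a graph is obtained from the (0/1 vertex-edge) incidence matrix by changing one of the two $1$'s in each column to $-1$; the displayed block form corresponds to listing the hub first, then the cycle vertices in cyclic order, with the $n-1$ spokes (oriented away from the hub) listed first followed by the cycle edges. For $c_0,\dots,c_{k-1}$, $\mathrm{circ}(c_0,\ldots,c_{k-1})$ denotes the $k\times k$ circulant matrix whose $(i,j)$-entry is $c_{(j-i)\bmod k}$. $\mathbf 1$ is the all-ones column vector of length $n-1$, $\mathbf 0$ the zero vector, $J_{n-1}$ the $(n-1)\times(n-1)$ all-ones matrix, $I_{n-1}$ the identity. The Moore–Penrose inverse $A^+$ of a real matrix $A$ is the unique matrix with $AA^+A=A$, $A^+AA^+=A^+$, $(AA^+)^T=AA^+$, $(A^+A)^T=A^+A$. *)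

From mathcomp Require Import all_boot all_order all_algebra.
Set Implicit Arguments. Unset Strict Implicit. Unset Printing Implicit Defensive.
Import Order.TTheory GRing.Theory Num.Theory.
Local Open Scope ring_scope.

Definition circ (R : ringType) (k : nat) (c : nat -> R) : 'M[R]_k :=
  \matrix_(i < k, j < k) c ((j + k - i) %% k)%N.

Definition wheel_circ_coef (R : ringType) (k : nat) (t : nat) : R :=
  if t == 0%N then 1 else if t == k.-1 then -1 else 0.

Definition is_moore_penrose (R : ringType) (m p : nat)
  (A : 'M[R]_(m, p)) (B : 'M[R]_(p, m)) : Prop :=
  [/\ A *m B *m A = A,
      B *m A *m B = B,
      (A *m B)^T = A *m B &
      (B *m A)^T = B *m A].

From mathcomp Require Import all_boot all_order all_algebra.
Import Order.TTheory GRing.Theory Num.Theory.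
Local Open Scope ring_scope.

(* Write u for the all-ones vector, J = u u^T, w = (1, u), and B = n N^+ for
   the claimed inverse.  Since the columns of C sum to zero, u^T C = 0, so u
   is fixed by M = C C^T + I; hence u^T X = -u^T, X u = -u and M X = J - n I,
   which give
      N B = n I - w w^T,   w^T N = 0,   B w = 0.
   So N B N = n N and B N B = n B, while N B is visibly symmetric.  Finally
   X = J - n M^-1 is symmetric, and with Y = -C^T X this makes B N symmetric.
   M is invertible over an ordered field because v M v^T = |v C|^2 + |v|^2. *)

Lemma circ_index_subZp m (i j : 'I_m.+1) :
  ((j + m.+1 - i) %% m.+1)%N = (j - i : 'I_m.+1) :> nat.
Proof. by rewrite /= modnDmr addnBA // ltnW. Qed.

Lemma const_mulmx_circ (R : ringType) k (c : nat -> R) :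
  (const_mx 1 : 'rV_k) *m circ k c = const_mx (\sum_(t < k) c t).
Proof.
case: k c => [|m] c; first by apply/matrixP => ? -[].
apply/matrixP => i j; rewrite !mxE [RHS](reindex_inj (can_inj (subKr j))).
by apply: eq_bigr => i' _; rewrite !mxE mul1r circ_index_subZp.
Qed.

Lemma sum_wheel_circ_coef (R : ringType) k :
  (1 < k)%N -> \sum_(t < k) wheel_circ_coef R k t = 0.
Proof.
case: k => [|[|m]] // _; rewrite big_ord_recl big_ord_recr /= big1 ?add0r.
  by rewrite /wheel_circ_coef /= eqxx addrN.
by move=> t _; rewrite /wheel_circ_coef /= /bump leq0n add1n eqSS ltn_eqF.
Qed.

Section GramPlusIdentity.
Variable R : realFieldType.

Lemma mulmx_trmx_row (l : nat) (w : 'rV[R]_l) :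
  (w *m w^T) 0 0 = \sum_i w 0 i ^+ 2.
Proof. by rewrite mxE; apply: eq_bigr => i _; rewrite mxE expr2. Qed.

Lemma mulmx_trmx_row_ge0 (l : nat) (w : 'rV[R]_l) : 0 <= (w *m w^T) 0 0.
Proof. by rewrite mulmx_trmx_row sumr_ge0 // => i _; rewrite sqr_ge0. Qed.

Lemma mulmx_trmx_row_eq0 (l : nat) (w : 'rV[R]_l) :
  ((w *m w^T) 0 0 == 0) = (w == 0).
Proof.
apply/idP/eqP => [|->]; last by rewrite mul0mx mxE.
rewrite mulmx_trmx_row psumr_eq0 => [/allP w0|i _]; last exact: sqr_ge0.
apply/rowP => i; rewrite mxE; apply/eqP; rewrite -sqrf_eq0.
exact: w0 (mem_index_enum i).
Qed.

Lemma gram_add1_unitmx (k l : nat) (A : 'M[R]_(k, l)) :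
  A *m A^T + 1%:M \in unitmx.
Proof.
rewrite unitmxE unitfE; apply/negP => /det0P [v /negP v_neq0 vM0].
have : (v *m (A *m A^T + 1%:M) *m v^T) 0 0 == 0 by rewrite vM0 mul0mx mxE.
rewrite mulmxDr mulmx1 mulmxDl mulmxA -[v *m A *m _ *m _]mulmxA -trmx_mul mxE.
rewrite paddr_eq0 ?mulmx_trmx_row_ge0 // !mulmx_trmx_row_eq0.
by case/andP => _ /v_neq0.
Qed.

End GramPlusIdentity.

Lemma is_moore_penrose_scale (R : fieldType) m p
    (A : 'M[R]_(m, p)) (B : 'M[R]_(p, m)) (d : R) :
  d != 0 -> A *m B *m A = d *: A -> B *m A *m B = d *: B ->
  (A *m B)^T = A *m B -> (B *m A)^T = B *m A ->
  is_moore_penrose A (d^-1 *: B).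
Proof.
move=> d_neq0 ABA BAB ABsym BAsym.
rewrite /is_moore_penrose -!(scalemxAl, scalemxAr) ABA BAB.
by rewrite !linearZ /= ABsym BAsym !scalerKV.
Qed.

Lemma is_moore_penrose_of_rank_one_defect (R : fieldType) m p
    (A : 'M[R]_(m, p)) (B : 'M[R]_(p, m)) (w : 'cV[R]_m) (d : R) :
  d != 0 -> A *m B = d%:M - w *m w^T -> w^T *m A = 0 -> B *m w = 0 ->
  (B *m A)^T = B *m A -> is_moore_penrose A (d^-1 *: B).
Proof.
move=> d_neq0 AB wA0 Bw0 BAsym; apply: is_moore_penrose_scale => //.
- by rewrite AB mulmxBl mul_scalar_mx -mulmxA wA0 mulmx0 subr0.
- by rewrite -mulmxA AB mulmxBr mul_mx_scalar mulmxA Bw0 mul0mx subr0.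
- by rewrite AB linearB /= tr_scalar_mx trmx_mul trmxK.
Qed.

Section BlockMoorePenrose.
Variables (R : fieldType) (k : nat) (C : 'M[R]_k) (u : 'cV[R]_k) (d : R).
Hypotheses (uC0 : u^T *m C = 0) (utu : u^T *m u = (d - 1)%:M) (d_neq0 : d != 0).
Hypothesis M_unit : C *m C^T + 1%:M \in unitmx.

Let M : 'M[R]_k := C *m C^T + 1%:M.
Let J := u *m u^T.
Let X := invmx M *m (J - d *: 1%:M).
Let Y : 'M[R]_k := - (C^T *m X).
Let w : 'cV[R]_(1 + k) := col_mx 1%:M u.

Let Ctu0 : C^T *m u = 0.
Proof. by rewrite -[u]trmxK -trmx_mul uC0 trmx0. Qed.

Let trM : M^T = M.
Proof. by rewrite linearD /= trmx_mul trmxK trmx1. Qed.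

Let invM_u : invmx M *m u = u.
Proof.
have Mu : M *m u = u by rewrite mulmxDl -mulmxA Ctu0 mulmx0 add0r mul1mx.
by rewrite -{1}Mu mulmxA mulVmx ?mul1mx.
Qed.

Let ut_invM : u^T *m invmx M = u^T.
Proof. by rewrite -[LHS]trmxK trmx_mul trmxK trmx_inv trM invM_u. Qed.

Let X_sub : X = J - d *: invmx M.
Proof. by rewrite /X mulmxBr mulmxA invM_u -scalemxAr mulmx1. Qed.

Let trX : X^T = X.
Proof. by rewrite X_sub linearB linearZ /= trmx_mul trmxK trmx_inv trM. Qed.

Let utX : u^T *m X = - u^T.
Proof.
rewrite X_sub mulmxBr mulmxA utu mul_scalar_mx -scalemxAr ut_invM.
by rewrite scalerBl scale1r addrAC subrr add0r.
Qed.

Let Xu : X *m u = - u.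
Proof. by rewrite -trX -[u]trmxK -trmx_mul trmxK utX linearN /= trmxK. Qed.

Let MX : M *m X = J - d%:M.
Proof. by rewrite mulmxA mulmxV // mul1mx scalemx1. Qed.

Let NB : block_mx u^T 0 (- 1%:M) C *m block_mx u X 0 Y = d%:M - w *m w^T.
Proof.
rewrite mulmx_block tr_col_mx mul_col_row scalar_mx_block opp_block_mx.
rewrite add_block_mx trmx1.
rewrite !(mul0mx, mulmx0, mul1mx, mulmx1, mulNmx, addr0, add0r).
congr block_mx; rewrite ?utu ?utX ?sub0r //.
- by rewrite rmorphB.
- by rewrite /Y mulmxN mulmxA -opprD -{1}[X]mul1mx -mulmxDl addrC MX opprB.
Qed.

Let wN : w^T *m block_mx u^T 0 (- 1%:M) C = 0.
Proof.
rewrite tr_col_mx trmx1 mul_row_block !(mul1mx, mulmx0, mulmxN, mulmx1, add0r).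
by rewrite subrr uC0 row_mx0.
Qed.

Let Bw : block_mx u X 0 Y *m w = 0.
Proof.
rewrite mul_block_col !(mulmx1, mul0mx, add0r) Xu subrr /Y mulNmx -mulmxA Xu.
by rewrite mulmxN opprK Ctu0 col_mx0.
Qed.

Let BN_sym : (block_mx u X 0 Y *m block_mx u^T 0 (- 1%:M) C)^T =
             block_mx u X 0 Y *m block_mx u^T 0 (- 1%:M) C.
Proof.
rewrite mulmx_block tr_block_mx !(mulmx0, add0r, addr0, mul0mx, mulmxN, mulmx1).
congr block_mx.
- by rewrite linearB /= trX trmx_mul trmxK.
- by rewrite /Y opprK trmx_mul trX trmxK.
- by rewrite /Y opprK trmx_mul trX.
- rewrite /Y mulNmx linearN /= trmx_mul [(C^T *m X)^T]trmx_mul.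
  by rewrite trX trmxK mulmxA.
Qed.

Lemma is_moore_penrose_block :
  is_moore_penrose (block_mx u^T 0 (- 1%:M) C) (d^-1 *: block_mx u X 0 Y).
Proof. exact: is_moore_penrose_of_rank_one_defect NB wN Bw BN_sym. Qed.

End BlockMoorePenrose.

Theorem mainTheorem6 (R : realFieldType) (n : nat) (hn : (4 <= n)%N) :
  let C : 'M[R]_(n.-1) := circ n.-1 (wheel_circ_coef R n.-1) in
  let N : 'M[R]_(1 + n.-1, n.-1 + n.-1) :=
    block_mx (const_mx 1) 0 (- 1%:M) C in
  let X : 'M[R]_(n.-1) :=
    invmx (C *m C^T + 1%:M) *m (const_mx 1 - n%:R *: 1%:M) in
  let Y : 'M[R]_(n.-1) := - (C^T *m X) in
  let Nplus : 'M[R]_(n.-1 + n.-1, 1 + n.-1) :=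
    (n%:R)^-1 *: block_mx (const_mx 1) X 0 Y in
  (C *m C^T + 1%:M) \in unitmx /\ is_moore_penrose N Nplus.
Proof.
case: n hn => [|[|[|[|m]]]] // _ C N X Y Nplus.
have M_unit : C *m C^T + 1%:M \in unitmx by exact: gram_add1_unitmx.
split => //.
pose u : 'cV[R]_m.+3 := const_mx 1.
have uC0 : u^T *m C = 0.
  by rewrite trmx_const const_mulmx_circ sum_wheel_circ_coef // raddf0.
have utu : u^T *m u = (m.+4%:R - 1)%:M.
  apply/matrixP => i j; rewrite !ord1 !mxE (eq_bigr (fun=> 1)) => [|t _].
    by rewrite sumr_const card_ord mulr1n [in RHS]mulrSr addrK.
  by rewrite !mxE mulr1.
have uut : const_mx 1 = u *m u^T.
  by apply/matrixP => i j; rewrite !mxE big_ord1 !mxE mulr1.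
rewrite /Nplus /Y /X uut /N -trmx_const.
by apply: is_moore_penrose_block; rewrite // pnatr_eq0.
Qed.
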